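(* Let $1\le d\le n$ be integers with $\gcd(n,d)=1$ and $d^2\equiv 1\pmod n$. Let $n=n'm$ with $n',m$ positive integers and $m$ odd, and let $1\le d'\le n'$ with $d'\equiv d\pmod{n'}$. Then $(n,d)$ is a critical pair if and only if $(n',d')$ is a critical pair.
   Context: A pair of positive integers $(n,d)$ with $d<n$ and $\gcd(n,d)=1$ is a critical pair if the Hirzebruch–Jung expansion $(a_0,\dots,a_r)$ of $n/d$ (defined by $\frac nd=a_0-1/(a_1-1/(\cdots-1/a_r))$, $a_i\ge2$) is symmetric ($a_i=a_{r-i}$ for all $i$), of odd length ($r$ even), and has even central term $a_{r/2}$. A pair $(n,d)$ with $d=n$ (i.e. $(1,1)$) is not critical. *)

From mathcomp Require Import all_boot all_order all_algebra.
Set Implicit Arguments. Unset Strict Implicit. Unset Printing Implicit Defensive.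
Import Order.TTheory GRing.Theory Num.Theory.

Local Open Scope ring_scope.

Fixpoint hjval (a : seq nat) : rat :=
  match a with
  | [::] => 0
  | [:: x] => x%:R
  | x :: s => x%:R - (hjval s)^-1
  end.

Definition is_HJ_expansion (n d : nat) (a : seq nat) : Prop :=
  [/\ size a != 0%N, all (fun x => 1 < x)%N a & hjval a = n%:R / d%:R].

Definition critical_pair (n d : nat) : Prop :=
  [/\ (0 < d)%N, (d < n)%N, coprime n d &
      exists a : seq nat,
        [/\ is_HJ_expansion n d a, a = rev a, odd (size a)
          & ~~ odd (nth 0%N a (size a)./2)]].

From mathcomp Require Import all_boot all_order all_algebra.
From mathcomp Require Import ring lra zify.
Set Implicit Arguments. Unset Strict Implicit. Unset Printing Implicit Defensive.
Import Order.TTheory GRing.Theory Num.Theory.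

(* A symmetric Hirzebruch-Jung expansion of odd length with even centre is
   b ++ 2k :: rev b.  If b has matrix [[p, r], [q, s]] (of determinant 1),
   multiplying out gives n = 2p(kp + r), d + 1 = 2p(kq + s) and
   d - 1 = 2q(kp + r), so n is even and d^2 = 1 (mod 2n).  Conversely these two
   conditions split n/2 along the coprime numbers (d + 1)/2 and (d - 1)/2 as
   n = 2pu, d = 2qu + 1 with pv = qu + 1, and the expansion b of p/q yields the
   expansion b ++ 2k :: rev b of n/d.  So (n, d) is critical iff 0 < d < n,
   gcd(n, d) = 1, 2 | n and d^2 = 1 (mod 2n), and for n = n'm with m odd these
   conditions agree for (n, d) and (n', d'): 2 | n iff 2 | n', squares of
   numbers congruent mod n' are congruent mod 2n', and 2n = lcm(2n', n). *)

Lemma palindrome_odd_split (T : Type) (x0 : T) (a : seq T) :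
  a = rev a -> odd (size a) ->
  a = take (size a)./2 a ++ nth x0 a (size a)./2 :: rev (take (size a)./2 a).
Proof.
move=> a_sym a_odd; set h := (size a)./2.
have size_a : size a = h.*2.+1 by rewrite -[size a]odd_double_half a_odd.
rewrite rev_take -a_sym (_ : size a - h = h.+1); last by rewrite size_a; lia.
by rewrite -drop_nth ?cat_take_drop // size_a; lia.
Qed.

Lemma palindrome_cat_cons_rev (T : Type) (x0 : T) (b : seq T) c
    (a := b ++ c :: rev b) :
  [/\ a = rev a, odd (size a) & nth x0 a (size a)./2 = c].
Proof.
rewrite {}/a rev_cat rev_cons revK cat_rcons size_cat /= size_rev addnS addnn.
by rewrite /= odd_double uphalf_double nth_cat ltnn subnn.
Qed.

Section NatArithmetic.
Local Open Scope nat_scope.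

Lemma dvdn_mul_coprime_gcd h a b :
  coprime a b -> h %| a * b -> h = gcdn h a * gcdn h b.
Proof.
move=> co_ab h_dvd; apply/eqP; rewrite eqn_dvd; apply/andP; split.
  have h_dvd_b : h %| gcdn h a * b by rewrite muln_gcdl dvdn_gcd dvdn_mulr.
  by rewrite muln_gcdr dvdn_gcd dvdn_mull.
rewrite Gauss_dvd ?dvdn_gcdl ?andbT //.
exact: coprime_dvdl (dvdn_gcdr h a) (coprime_dvdr (dvdn_gcdr h b) co_ab).
Qed.

Lemma factors_of_sqr_eq1_mod_double n d :
  0 < d -> 2 %| n -> d ^ 2 = 1 %[mod n.*2] ->
  exists p q u v, [/\ n = 2 * p * u, d = (2 * q * u).+1 & p * v = (q * u).+1].
Proof.
move=> d_gt0 n_even /eqP; rewrite eqn_mod_dvd ?expn_gt0 ?d_gt0 // => n2_dvd.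
have d_odd : odd d.
  have : 2 %| d ^ 2 - 1 by apply: dvdn_trans n2_dvd; rewrite -muln2 dvdn_mull.
  by rewrite dvdn2 oddB ?expn_gt0 ?d_gt0 // oddX addbT negbK.
set h := n./2; set t := d./2.
have n_eq : n = h.*2 by rewrite -[LHS]odd_double_half -[odd n]negbK -dvdn2 n_even.
have d_eq : d = t.*2.+1 by rewrite -[LHS]odd_double_half d_odd.
have h_dvd : h %| t.+1 * t.
  have sqr_eq : d ^ 2 - 1 = 4 * (t.+1 * t) by rewrite d_eq; nia.
  by rewrite -(@dvdn_pmul2l 4) // -sqr_eq (_ : 4 * h = n.*2) // n_eq; lia.
pose p := gcdn h t.+1; pose u := gcdn h t.
exists p, (t %/ u), u, (t.+1 %/ p).
have h_eq := dvdn_mul_coprime_gcd (coprimeSn t) h_dvd.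
rewrite -!mulnA !(mulnC _ (_ %/ _)) !divnK ?dvdn_gcdr //.
by split; lia.
Qed.

Lemma sqr_eq_mod_double N x y :
  2 %| N -> x = y %[mod N] -> x ^ 2 = y ^ 2 %[mod N.*2].
Proof.
move=> /dvdnP[h ->]; wlog le_yx : x y / y <= x => [hw|].
  by case/orP: (leq_total y x) => /hw // + /esym => /[apply] /esym.
move/eqP; rewrite eqn_mod_dvd // => /dvdnP[t xy].
have -> : x ^ 2 = (y * t + h * t ^ 2) * (h * 2).*2 + y ^ 2 by nia.
by rewrite modnMDl.
Qed.

Lemma eqn_mod_double_odd k m x y : odd m ->
  (x == y %[mod (k * m).*2]) = (x == y %[mod k.*2]) && (x == y %[mod k * m]).
Proof.
move=> m_odd; wlog le_yx : x y / y <= x => [hw|].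
  by case/orP: (leq_total y x) => /hw //; rewrite ![y %% _ == _]eq_sym.
rewrite !eqn_mod_dvd // -dvdn_lcm -!muln2 -muln_lcmr.
have lcm2m : lcmn 2 m = m * 2.
  by rewrite lcmnC -muln_lcm_gcd (eqP (_ : coprime m 2)) ?muln1 // coprimen2.
by rewrite lcm2m mulnA.
Qed.

Lemma coprime_even_ltn n d : 2 %| n -> coprime n d -> d <= n -> d < n.
Proof.
move=> n_even co_nd; rewrite leq_eqVlt => /orP[/eqP d_eq | //].
by move: co_nd n_even; rewrite d_eq /coprime gcdnn => /eqP ->.
Qed.

End NatArithmetic.

Local Open Scope ring_scope.

Lemma sqr_eq1_mod_double_of_factors (n d : nat) (p q u v : int) :
  n%:Z = 2 * p * u -> d%:Z + 1 = 2 * p * v -> d%:Z - 1 = 2 * q * u ->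
  (2 %| n)%N /\ (d ^ 2 = 1 %[mod n.*2])%N.
Proof.
move=> n_eq d_succ d_pred; split.
  rewrite -[(2 %| n)%N]/(2 %| n%:Z)%Z; apply/dvdzP; exists (p * u).
  by rewrite n_eq; ring.
apply/eqP; rewrite -eqz_nat -!modz_nat eqz_mod_dvd; apply/dvdzP; exists (q * v).
rewrite -natz natrX natz -muln2 PoszM.
have -> : d%:Z ^+ 2 - 1 = (d%:Z + 1) * (d%:Z - 1) by ring.
by rewrite d_succ d_pred n_eq; ring.
Qed.

Lemma coprime_frac_inj (N D : int) (n d : nat) :
  coprime `|N| `|D| -> coprime n d -> 0 <= D -> (0 < n)%N -> (0 < d)%N ->
  N%:~R / D%:~R = n%:R / d%:R :> rat -> N = n /\ D = d.
Proof.
move=> co_ND co_nd D_ge0 n_gt0 d_gt0 /[dup] /(congr1 numq) + /(congr1 denq).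
rewrite !pmulrn !coprimeq_num ?coprimeq_den // [Num.sg d%:Z]gtr0_sg ?ltz_nat //.
case: ltrgt0P D_ge0 => // [D_gt0 _ | -> _]; last by rewrite sgr0; lia.
by rewrite gtr0_sg // gt_eqF // gtr0_norm // !mul1r => -> ->.
Qed.

Lemma mulmx2E (R : pzSemiRingType) (A B : 'M[R]_2) i j :
  (A *m B) i j = A i 0 * B 0 j + A i 1 * B 1 j.
Proof.
by rewrite mxE big_ord_recl big_ord1 (_ : lift ord0 ord0 = 1); last exact: val_inj.
Qed.

Lemma det_mx2 (R : comPzRingType) (A : 'M[R]_2) :
  \det A = A 0 0 * A 1 1 - A 0 1 * A 1 0.
Proof.
have l0 : lift 0 0 = 1 :> 'I_2 by exact: val_inj.
have l1 : lift 1 0 = 0 :> 'I_2 by exact: val_inj.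
rewrite (expand_det_row _ 0) big_ord_recl big_ord1 /cofactor !det_mx11 !mxE.
rewrite -[ord0]/(0 : 'I_2) -[lift ord0 ord0]/(lift 0 0) l0 l1 [(0 + _)%N]/=.
by rewrite expr0 expr1; ring.
Qed.

(* The Moebius map z |-> x - 1/z. *)
Definition hj_mx (x : nat) : 'M[int]_2 :=
  \matrix_(i, j) if i == 0 then (if j == 0 then x%:Z else -1) else (j == 0)%:Z.

Definition hj_mat (s : seq nat) : 'M[int]_2 := \prod_(x <- s) hj_mx x.

Definition sgn_mx : 'M[int]_2 := \matrix_(i, j) ((i == j)%:Z * (-1) ^+ i).

Lemma hj_mat_cons x s : hj_mat (x :: s) = hj_mx x *m hj_mat s.
Proof. by rewrite /hj_mat big_cons mulmxE. Qed.

Lemma hj_mat_cat s t : hj_mat (s ++ t) = hj_mat s *m hj_mat t.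
Proof. by rewrite /hj_mat big_cat mulmxE. Qed.

Lemma det_hj_mat s : \det (hj_mat s) = 1.
Proof.
elim: s => [|x s IH]; first by rewrite /hj_mat big_nil det1.
by rewrite hj_mat_cons det_mulmx IH mulr1 det_mx2 !mxE /=; ring.
Qed.

Lemma sgn_mxK : sgn_mx *m sgn_mx = 1.
Proof.
apply/matrixP => i j; rewrite mulmx2E !mxE.
by case: i => [[|[|//]]] ?; case: j => [[|[|//]]] ?.
Qed.

Lemma trmx_hj_mx x : (hj_mx x)^T = sgn_mx *m hj_mx x *m sgn_mx.
Proof.
apply/matrixP => i j; rewrite !mulmx2E !mxE.
by case: i => [[|[|//]]] ?; case: j => [[|[|//]]] ? /=; ring.
Qed.

Lemma hj_mat_rev s : hj_mat (rev s) = sgn_mx *m (hj_mat s)^T *m sgn_mx.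
Proof.
elim: s => [|x s IH]; first by rewrite /hj_mat big_nil trmx1 mulmx1 sgn_mxK.
rewrite rev_cons -cats1 hj_mat_cat {2}/hj_mat big_seq1 IH hj_mat_cons.
by rewrite trmx_mul trmx_hj_mx !mulmxA -[RHS]mulmxA sgn_mxK mulmx1.
Qed.

Lemma hj_mat_even_palindrome b k
    (M := hj_mat b) (N := hj_mat (b ++ (2 * k)%N :: rev b)) :
  [/\ N 0 0 = 2 * M 0 0 * (k%:Z * M 0 0 + M 0 1),
      N 1 0 = 2 * M 1 0 * (k%:Z * M 0 0 + M 0 1) + \det M
    & N 1 0 = 2 * M 0 0 * (k%:Z * M 1 0 + M 1 1) - \det M].
Proof.
rewrite {}/N hj_mat_cat hj_mat_cons hj_mat_rev det_mx2 !mulmx2E !mxE /= PoszM.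
by split; ring.
Qed.

Lemma hj_mat_bounds s (M := hj_mat s) : all (fun x => 1 < x)%N s ->
  [/\ 0 <= M 1 0, M 1 0 < M 0 0, M 0 1 <= 0 & M 0 1 < M 1 1].
Proof.
rewrite {}/M; elim: s => [|x s IH] /=; first by rewrite /hj_mat big_nil !mxE.
case/andP => x_gt1 /IH[]; rewrite hj_mat_cons !mulmx2E !mxE /=.
have x_ge2 : 2 <= x%:Z by rewrite lez_nat.
move: (hj_mat s 0 0) (hj_mat s 0 1) (hj_mat s 1 0) (hj_mat s 1 1) => p r q t.
move=> q_ge0 q_lt_p r_le0 r_lt_t.
have xp_ge : 2 * p <= x%:Z * p := ler_wpM2r (le_trans q_ge0 (ltW q_lt_p)) x_ge2.
have xr_le : x%:Z * r <= 2 * r := ler_wnM2r r_le0 x_ge2.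
by split; lia.
Qed.

Lemma hjval_cons x s : hjval (x :: s) = x%:R - (hjval s)^-1.
Proof. by case: s => //=; rewrite invr0 subr0. Qed.

Lemma hjval_hj_mat s : all (fun x => 1 < x)%N s ->
  hjval s = (hj_mat s 0 0)%:~R / (hj_mat s 1 0)%:~R.
Proof.
elim: s => [|x s IH]; first by rewrite /hj_mat big_nil !mxE /= invr0 mulr0.
case/andP => x_gt1 s_gt1; have [q_ge0 q_lt_p _ _] := hj_mat_bounds s_gt1.
have p_neq0 : (hj_mat s 0 0)%:~R != 0 :> rat by rewrite intr_eq0; lia.
rewrite hjval_cons IH // hj_mat_cons !mulmx2E !mxE /= invf_div.
by field.
Qed.

Lemma hj_mat_exists p q : (q < p)%N -> coprime p q ->
  exists2 b, all (fun x => 1 < x)%N b & hj_mat b 0 0 = p /\ hj_mat b 1 0 = q.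
Proof.
elim/ltn_ind: p q => p IH q q_lt_p co_pq.
have [q0 | q_gt0] := posnP q.
  move: co_pq; rewrite q0 /coprime gcdn0 => /eqP ->.
  by exists [::]; rewrite // /hj_mat big_nil !mxE.
have [x [r [pr_eq r_lt_q]]] : exists x r, (p + r = x * q /\ r < q)%N.
  exists ((p + q.-1) %/ q)%N, ((p + q.-1) %/ q * q - p)%N.
  have := divn_eq (p + q.-1) q; have := ltn_pmod (p + q.-1) q_gt0; lia.
have x_gt1 : (1 < x)%N by nia.
have co_qr : coprime q r.
  rewrite /coprime -dvdn1 -(eqP co_pq) dvdn_gcd dvdn_gcdl /=.
  by rewrite -(dvdn_addl p (dvdn_gcdr q r)) pr_eq dvdn_mull ?dvdn_gcdl.
have [b b_gt1 [b_p b_q]] := IH q q_lt_p r r_lt_q co_qr.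
exists (x :: b); first by rewrite /= x_gt1.
by rewrite hj_mat_cons !mulmx2E !mxE /= b_p b_q; split; lia.
Qed.

Lemma critical_pair_sqr_eq1 n d : critical_pair n d ->
  (2 %| n)%N /\ (d ^ 2 = 1 %[mod n.*2])%N.
Proof.
case=> d_gt0 d_lt_n co_nd [a [[_ a_gt1 a_val] a_sym a_odd mid_even]].
move: mid_even (palindrome_odd_split 0%N a_sym a_odd).
set b := take _ a; set c := nth _ _ _ => c_even a_eq.
have c_eq : c = (2 * c./2)%N by rewrite mul2n -[LHS]odd_double_half (negbTE c_even).
rewrite c_eq in a_eq.
have [D_ge0 _ _ _] := hj_mat_bounds a_gt1.
have co_ND : coprime `|hj_mat a 0 0| `|hj_mat a 1 0|.
  rewrite -coprimezE; apply/coprimezP; exists (hj_mat a 1 1, - hj_mat a 0 1).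
  by rewrite /= -(det_hj_mat a) det_mx2; ring.
have [N_n D_d] := coprime_frac_inj co_ND co_nd D_ge0 (ltn_trans d_gt0 d_lt_n)
  d_gt0 (etrans (esym (hjval_hj_mat a_gt1)) a_val).
have [N_eq D_pred D_succ] := hj_mat_even_palindrome b c./2.
rewrite -a_eq det_hj_mat N_n D_d in N_eq D_pred D_succ.
apply: (@sqr_eq1_mod_double_of_factors n d (hj_mat b 0 0) (hj_mat b 1 0) _
  (c./2%:Z * hj_mat b 1 0 + hj_mat b 1 1)).
- by rewrite N_eq.
- by rewrite D_succ subrK.
- by rewrite D_pred addrK.
Qed.

Lemma palindromic_hj_expansion (p q u v : nat) :
  (q < p)%N -> (0 < u)%N -> (p * v = (q * u).+1)%N ->
  exists a, [/\ is_HJ_expansion (2 * p * u) (2 * q * u).+1 a, a = rev a,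
    odd (size a) & ~~ odd (nth 0%N a (size a)./2)].
Proof.
move=> q_lt_p u_gt0 pv_eq.
have co_pq : coprime p q.
  rewrite /coprime -dvdn1 (_ : 1%N = p * v - q * u)%N; last by lia.
  by rewrite dvdn_sub ?dvdn_mulr ?dvdn_gcdl ?dvdn_gcdr.
have [b b_gt1 [b_p b_q]] := hj_mat_exists q_lt_p co_pq.
have [_ _ r_le0 _] := hj_mat_bounds b_gt1.
have det_b := det_hj_mat b; rewrite det_mx2 b_p b_q in det_b.
have [k k_eq] : exists k : nat, p%:Z * k%:Z = u%:Z - hj_mat b 0 1.
  have pv_int : p%:Z * v%:Z = q%:Z * u%:Z + 1 by rewrite -PoszM pv_eq; lia.
  move: (hj_mat b 0 1) (hj_mat b 1 1) r_le0 det_b => r s r_le0 det_b.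
  have pk_eq : p%:Z * (s * u%:Z - r * v%:Z) = u%:Z - r.
    have -> : u%:Z - r = (p%:Z * s - r * q%:Z) * u%:Z - r * (p%:Z * v%:Z - q%:Z * u%:Z).
      by rewrite det_b pv_int; ring.
    by ring.
  by exists (absz (s * u%:Z - r * v%:Z)%R); rewrite gez0_abs //; nia.
have k_gt0 : (0 < k)%N by nia.
have [a_sym a_odd a_mid] := palindrome_cat_cons_rev 0%N b (2 * k)%N.
have a_gt1 : all (fun x => 1 < x)%N (b ++ (2 * k)%N :: rev b).
  by rewrite all_cat /= all_rev b_gt1 andbT; lia.
exists (b ++ (2 * k)%N :: rev b); split => //; last by rewrite a_mid oddM.
split => //; first by rewrite size_cat /= addnS.
have [N_eq D_eq _] := hj_mat_even_palindrome b k.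
have u_eq : k%:Z * p + hj_mat b 0 1 = u by rewrite mulrC k_eq subrK.
rewrite hjval_hj_mat // !pmulrn N_eq D_eq det_hj_mat b_p b_q u_eq.
by rewrite -[(2 * q * u).+1]addn1 PoszD !PoszM.
Qed.

Lemma critical_pairE n d :
  critical_pair n d <->
  [/\ (0 < d)%N, (d < n)%N, coprime n d, (2 %| n)%N & (d ^ 2 = 1 %[mod n.*2])%N].
Proof.
split=> [crit | [d_gt0 d_lt_n co_nd n_even sqr_d]].
  by case: (crit) => d_gt0 d_lt_n co_nd _; case: (critical_pair_sqr_eq1 crit).
have [p [q [u [v [n_eq d_eq pv_eq]]]]] :=
  factors_of_sqr_eq1_mod_double d_gt0 n_even sqr_d.
split => //; rewrite n_eq d_eq; apply: palindromic_hj_expansion pv_eq;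
  by move: d_lt_n; rewrite n_eq d_eq; nia.
Qed.

Theorem corollary1p7 (n d n' m d' : nat) :
  (1 <= d)%N -> (d <= n)%N -> coprime n d -> (d ^ 2 = 1 %[mod n])%N ->
  (0 < n')%N -> (0 < m)%N -> n = (n' * m)%N -> odd m ->
  (1 <= d')%N -> (d' <= n')%N -> (d' = d %[mod n'])%N ->
  (critical_pair n d <-> critical_pair n' d').
Proof.
move=> d_gt0 d_le_n co_nd sqr_d _ _ n_eq m_odd d'_gt0 d'_le_n' d'_eq.
have co_n'd' : coprime n' d'.
  by rewrite -coprime_modr d'_eq coprime_modr (coprime_dvdl _ co_nd) // n_eq dvdn_mulr.
have even_nE : (2 %| n)%N = (2 %| n')%N by rewrite n_eq Gauss_dvdl // coprime2n.
have sqr_modE : (2 %| n')%N ->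
    (d ^ 2 == 1 %[mod n.*2])%N = (d' ^ 2 == 1 %[mod n'.*2])%N.
  move=> n'_even; rewrite n_eq eqn_mod_double_odd // -n_eq sqr_d eqxx andbT.
  by rewrite (sqr_eq_mod_double n'_even d'_eq).
rewrite !critical_pairE; split=> -[_ _ _ two_dvd /eqP sqr_mod].
- have n'_even : (2 %| n')%N by rewrite -even_nE.
  split=> //; first exact: coprime_even_ltn.
  by apply/eqP; rewrite -sqr_modE.
- have n_even : (2 %| n)%N by rewrite even_nE.
  split=> //; first exact: coprime_even_ltn.
  by apply/eqP; rewrite sqr_modE.
Qed.
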